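(* Let $n$ be such that $n$ or $1/n$ is a positive integer, let $\Delta_n=\mathrm{diag}(n,\frac1n,1,\dots,1)\in\mathcal{M}_{2g}(\mathbb{Q})$, and let $V$, $W$ be Seifert matrices with $W=\Delta_nV\Delta_n$. Then there are enlargements $\tilde V$ of $V$ and $\tilde W$ of $W$ with $\tilde W=P\tilde VP^t$ for some integral symplectic matrix $P$. Furthermore, if $(M,K,\Sigma,\underline f,V)$ and $(M',K',\Sigma',\underline f',W)$ are $\mathbb{Q}$SK-systems, then $W$ can be obtained from $V$ by a sequence of one enlargement, one integral symplectic congruence and one reduction, which induces the same $\tau$-class of isomorphisms $\mathcal{A}(K)\to\mathcal{A}(K')$ as the congruence $W=\Delta_nV\Delta_n$.
   Context: $J$: $2g\times2g$ block-diagonal with blocks $\begin{pmatrix}0&-1\\1&0\end{pmatrix}$. Seifert matrix: $V\in\mathcal{M}_{2g}(\mathbb{Q})$ with $V-V^t=J$ (note $\Delta_n$ is symplectic). $P$ symplectic: $PJP^t=J$. Row enlargement of $V$: $\begin{pmatrix}0&0&0\\1&x&\rho^t\\0&\rho&V\end{pmatrix}$; column enlargement: $\begin{pmatrix}0&-1&0\\0&x&\rho^t\\0&\rho&V\end{pmatrix}$ ($x\in\mathbb{Q}$, $\rho\in\mathbb{Q}^{2g}$); $V$ is a reduction of these. $\mathbb{Q}$SK-system $(M,K,\Sigma,\underline f,V)$: a rational homology 3-sphere $M$, knot $K$ trivial in $H_1(M;\mathbb{Z})$, Seifert surface $\Sigma$ of genus $g$, basis $(f_i)$ of $H_1(\Sigma;\mathbb{Z})$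 with intersection matrix $-J$, $V_{ij}=lk(f_i,f_j^+)$. $\mathcal{A}(K)=H_1(\tilde X;\mathbb{Q})$ for the infinite cyclic covering $\tilde X$ of the exterior, $t$ acting by a deck generator. Associated generators $(b_i)$: lifts of meridians of the $f_i$, generating $\mathcal{A}(K)$ with relations $\sum_i(tV-V^t)_{ij}b_i$, defined up to a common factor $t^k$. Induced $\tau$-class (the $\tau$-class of $\xi$ is $\{\xi\circ m_k\}$, $m_k$ multiplication by $t^k$): for a congruence $V'=PVP^t$, the class of $b_i\mapsto\sum_kP_{ki}b'_k$; for an enlargement, the class of $b_i\mapsto b'_{i+2}$ (generators of the enlarged matrix indexed $1,\dots,2g+2$); reductions give inverses; sequences give compositions. Here the intermediate enlarged matrices define modules by the same presentation. *)

From HB Require Import structures.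
From mathcomp Require Import all_boot all_order all_algebra.
Set Implicit Arguments. Unset Strict Implicit. Unset Printing Implicit Defensive.
Import Order.TTheory GRing.Theory Num.Theory.
Local Open Scope ring_scope.

(* J : 2g x 2g block diagonal with blocks [[0,-1],[1,0]] (0-indexed). *)
Definition Jmx (g : nat) : 'M[rat]_(g.*2) :=
  \matrix_(i, j)
    if ~~ odd i && (j == i.+1 :> nat) then -1
    else if odd i && (j.+1 == i :> nat) then 1 else 0.

Definition seifert (g : nat) (V : 'M[rat]_(g.*2)) : Prop := V - V^T = Jmx g.

Definition symplectic (g : nat) (P : 'M[rat]_(g.*2)) : Prop :=
  P *m Jmx g *m P^T = Jmx g.

Definition integral_mx (m n : nat) (P : 'M[rat]_(m, n)) : Prop :=
  forall i j, P i j \is a Num.int.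

Definition Delta (g : nat) (n : rat) : 'M[rat]_(g.*2) :=
  \matrix_(i, j)
    if i == j then (if (i == 0%N :> nat) then n
                    else if (i == 1%N :> nat) then n^-1 else 1)
    else 0.

(* Row enlargement  [[0,0,0],[1,x,rho^t],[0,rho,V]]. *)
Definition row_enl (g : nat) (V : 'M[rat]_(g.*2)) (x : rat) (rho : 'cV[rat]_(g.*2))
  : 'M[rat]_((g.+1).*2) :=
  block_mx (\matrix_(i < 2, j < 2)
              if (i == 1%N :> nat) && (j == 0%N :> nat) then 1
              else if (i == 1%N :> nat) && (j == 1%N :> nat) then x else 0)
           (col_mx (0 : 'rV[rat]_(g.*2)) rho^T)
           (row_mx (0 : 'cV[rat]_(g.*2)) rho)
           V.

(* Column enlargement  [[0,-1,0],[0,x,rho^t],[0,rho,V]]. *)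
Definition col_enl (g : nat) (V : 'M[rat]_(g.*2)) (x : rat) (rho : 'cV[rat]_(g.*2))
  : 'M[rat]_((g.+1).*2) :=
  block_mx (\matrix_(i < 2, j < 2)
              if (i == 0%N :> nat) && (j == 1%N :> nat) then -1
              else if (i == 1%N :> nat) && (j == 1%N :> nat) then x else 0)
           (col_mx (0 : 'rV[rat]_(g.*2)) rho^T)
           (row_mx (0 : 'cV[rat]_(g.*2)) rho)
           V.

(* Vt is an enlargement of V (equivalently, V is a reduction of Vt). *)
Definition enlargement (g : nat) (V : 'M[rat]_(g.*2)) (Vt : 'M[rat]_((g.+1).*2)) : Prop :=
  exists (x : rat) (rho : 'cV[rat]_(g.*2)), Vt = row_enl V x rho \/ Vt = col_enl V x rho.

(* Relation matrix tV - V^t over Q[t]; relation j is sum_i (tV - V^t)_{ij} b_i,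
   i.e. (as a coordinate row vector in the generators) row j of (tV - V^t)^T. *)
Definition alex_rel (m : nat) (V : 'M[rat]_m) : 'M[{poly rat}]_m :=
  'X *: map_mx polyC V - map_mx polyC V^T.

(* Equality in the module A(V) = Q[t,t^-1]^m / (relations) of two elements
   given by coordinate row vectors (w.r.t. the generators b_1..b_m) with
   coefficients in Q[t]:  x = y in A(V) iff t^N (x - y) is a Q[t]-combination
   of relations for some N (clearing denominators t^k of Laurent coefficients). *)
Definition alex_eq (m : nat) (V : 'M[rat]_m) (x y : 'rV[{poly rat}]_m) : Prop :=
  exists (N : nat) (c : 'rV[{poly rat}]_m), 'X^N *: (x - y) = c *m (alex_rel V)^T.

From HB Require Import structures.
From mathcomp Require Import all_boot all_order all_algebra.
From mathcomp Require Import ring.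
Set Implicit Arguments. Unset Strict Implicit. Unset Printing Implicit Defensive.
Import Order.TTheory GRing.Theory Num.Theory.
Local Open Scope ring_scope.

(* The case n = k is explicit.  Write e0, e1 for the two new basis vectors of
   the enlarged space and f0, f1 for the first symplectic pair of the old one.
   Take the row enlargement Vt of V with rho = k^-1 (column f1 of V) and
   x = V(f1,f1) / k^2, and the integral symplectic matrix P_k acting on rows by
   e0 |-> f1 - k e1, e1 |-> -f0, f0 |-> k f0 + e0, f1 |-> e1 (identity
   elsewhere).  Then P_k Vt P_k^T is a column enlargement of Delta_k V Delta_k^T,
   and the generators of the two Alexander modules match up to explicit
   relations.
   The case n = 1/k follows by symmetry: V = Delta_k W Delta_k^T, so the first
   case applies to (W, V), and inverting P_k exchanges the roles of V and W.
   This uses that equality in the Alexander module is a congruence transported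
   along congruences of presentation matrices (section AlexanderModule), so
   that tau-compatibility survives inversion (lemma tau_compat_inv). *)

Section AlexanderModule.
Variables (m : nat) (V : 'M[rat]_m).
Implicit Types (x y : 'rV[{poly rat}]_m).

Lemma alex_eq_refl x : alex_eq V x x.
Proof. by exists 0%N, 0; rewrite subrr scaler0 mul0mx. Qed.

Lemma alex_eq_sym x y : alex_eq V x y -> alex_eq V y x.
Proof.
by case=> N [c e]; exists N, (- c); rewrite mulNmx -e -scalerN opprB.
Qed.

Lemma alex_eq_add x1 y1 x2 y2 :
  alex_eq V x1 y1 -> alex_eq V x2 y2 -> alex_eq V (x1 + x2) (y1 + y2).
Proof.
case=> N1 [c1 e1] [N2 [c2 e2]].
exists (N1 + N2)%N, ('X^N2 *: c1 + 'X^N1 *: c2).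
rewrite mulmxDl -!scalemxAl -e1 -e2 !scalerA -!exprD [(N2 + N1)%N]addnC.
by rewrite -scalerDr opprD addrACA.
Qed.

Lemma alex_eq_scale a x y : alex_eq V x y -> alex_eq V (a *: x) (a *: y).
Proof.
case=> N [c e]; exists N, (a *: c).
by rewrite -scalemxAl -e -scalerBr !scalerA mulrC.
Qed.

Lemma alex_eq_mul p (X Y : 'M[{poly rat}]_(p, m)) (u : 'rV_p) :
  (forall i, alex_eq V (row i X) (row i Y)) -> alex_eq V (u *m X) (u *m Y).
Proof.
move=> eqXY; rewrite !mulmx_sum_row.
elim/big_ind2: _ => [|x1 x2 y1 y2|i _]; first exact: alex_eq_refl.
  exact: alex_eq_add.
exact: alex_eq_scale (eqXY i).
Qed.

Lemma alex_rel_congr (P : 'M[rat]_m) :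
  alex_rel (P *m V *m P^T) =
  map_mx polyC P *m alex_rel V *m (map_mx polyC P)^T.
Proof.
rewrite /alex_rel !trmx_mul trmxK !map_mxM !map_trmx mulmxA.
by rewrite mulmxBr mulmxBl -scalemxAr -scalemxAl.
Qed.

(* Hence the map b_i |-> sum_k P_ki b'_k, i.e. x |-> x P^T on row vectors,
   carries equalities in A(V) to equalities in A(P V P^T) when P is
   invertible. *)
Lemma alex_eq_congr (P Q : 'M[rat]_m) x y :
  Q *m P = 1%:M -> alex_eq V x y ->
  alex_eq (P *m V *m P^T) (x *m (map_mx polyC P)^T) (y *m (map_mx polyC P)^T).
Proof.
move=> QP [N [c e]]; exists N, (c *m map_mx polyC Q).
rewrite alex_rel_congr !trmx_mul trmxK !mulmxA -(mulmxA c) -map_mxM QP map_mx1.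
by rewrite mulmx1 -e -mulmxBl scalemxAl.
Qed.
End AlexanderModule.

Section BilinearForm.
Variables (R : comNzRingType) (m : nat).
Implicit Types (M : 'M[R]_m) (u v : 'rV[R]_m).

(* The bilinear form (u, v) |-> u M v^T.  Entries of products A M B^T are its
   values on rows of A and B, so matrix identities reduce to expansions of
   rows in the standard basis [ebasis]. *)
Definition bilin M u v : R := (u *m M *m v^T) 0 0.
Definition ebasis (a : 'I_m) : 'rV[R]_m := delta_mx 0 a.

Lemma bilin_entry (A B M : 'M[R]_m) i j :
  (A *m M *m B^T) i j = bilin M (row i A) (row j B).
Proof.
have -> : (A *m M *m B^T) i j = (row i (A *m M *m B^T)) 0 j by rewrite [RHS]mxE.
rewrite !row_mul /bilin [LHS]mxE [RHS]mxE; apply: eq_bigr => k _; by rewrite !mxE.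
Qed.

Lemma mul_row_entry u M j : (u *m M) 0 j = bilin M u (ebasis j).
Proof. by rewrite /bilin /ebasis trmx_delta -colE [RHS]mxE. Qed.

Lemma bilinDl M u v w : bilin M (u + v) w = bilin M u w + bilin M v w.
Proof. by rewrite /bilin !mulmxDl mxE. Qed.
Lemma bilinDr M u v w : bilin M w (u + v) = bilin M w u + bilin M w v.
Proof. by rewrite /bilin linearD /= mulmxDr mxE. Qed.
Lemma bilinZl M a u w : bilin M (a *: u) w = a * bilin M u w.
Proof. by rewrite /bilin -!scalemxAl mxE. Qed.
Lemma bilinZr M a u w : bilin M w (a *: u) = a * bilin M w u.
Proof. by rewrite /bilin linearZ /= -scalemxAr mxE. Qed.
Lemma bilinNl M u w : bilin M (- u) w = - bilin M u w.
Proof. by rewrite -scaleN1r bilinZl mulN1r. Qed.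
Lemma bilinNr M u w : bilin M w (- u) = - bilin M w u.
Proof. by rewrite -scaleN1r bilinZr mulN1r. Qed.
Lemma bilinBl M u v w : bilin M (u - v) w = bilin M u w - bilin M v w.
Proof. by rewrite bilinDl bilinNl. Qed.
Lemma bilinBr M u v w : bilin M w (u - v) = bilin M w u - bilin M w v.
Proof. by rewrite bilinDr bilinNr. Qed.
Lemma bilin_basis M a b : bilin M (ebasis a) (ebasis b) = M a b.
Proof. by rewrite /bilin /ebasis -rowE trmx_delta -colE !mxE. Qed.
End BilinearForm.

Arguments ebasis {R m} a.

Ltac bilin_expand :=
  do 3 rewrite ?bilinDl ?bilinDr ?bilinBl ?bilinBr ?bilinZl ?bilinZr ?bilinNl
    ?bilinNr; rewrite ?bilin_basis.

Lemma symplectic_inv g (P Q : 'M[rat]_(g.*2)) :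
  Q *m P = 1%:M -> symplectic P -> symplectic Q.
Proof.
move=> QP sP; rewrite /symplectic -{1}sP !mulmxA QP mul1mx.
by rewrite -mulmxA -trmx_mul QP trmx1 mulmx1.
Qed.

Section DeltaMatrix.
Variable g : nat.

Definition delta_diag (n : rat) (a : 'I_(g.*2)) : rat := Delta g n a a.

Lemma row_Delta n a : row a (Delta g n) = delta_diag n a *: ebasis a.
Proof.
apply/rowP => c; rewrite /delta_diag !mxE eqxx /=.
by case: eqVneq => [->|_]; rewrite ?mulr1 ?mulr0.
Qed.

Lemma Delta_mulV n : n != 0 -> Delta g n *m Delta g n^-1 = 1%:M.
Proof.
move=> n0; apply/row_matrixP => a.
rewrite row_mul row_Delta -scalemxAl -rowE row_Delta scalerA row1 /delta_diag.
rewrite !mxE eqxx; case: ifP => _; first by rewrite mulfV ?scale1r.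
by case: ifP => _; rewrite ?invrK ?mulVf ?mulr1 ?scale1r.
Qed.
End DeltaMatrix.

(* For a space of dimension 2(g+1) with basis indexed by 'I_m, the
   enlarged space of dimension 2(g+2) has the two new indices [e0], [e1]
   followed by the old ones [old b]; [j0], [j1] are the first two old indices
   (the pair on which Delta_n is not the identity), [f0], [f1] their images,
   and [generic b] says that b is neither j0 nor j1. *)
Section Indices.
Variable g : nat.
Local Notation m := ((g.+1).*2).
Local Notation N := ((g.+2).*2).

Definition j0 : 'I_m := @ord0 (g.*2).+1.
Definition j1 : 'I_m := @Ordinal (g.*2).+2 1 isT.
Definition old (b : 'I_m) : 'I_N := rshift 2 b.
Definition e0 : 'I_N := lshift m (@ord0 1).
Definition e1 : 'I_N := lshift m (@ord_max 1).
Definition f0 : 'I_N := old j0.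
Definition f1 : 'I_N := old j1.
Definition generic (b : 'I_m) : bool := (b != j0) && (b != j1).

Variant enl_index (i : 'I_N) : Type :=
  | IE0 of i = e0 | IE1 of i = e1 | IF0 of i = f0 | IF1 of i = f1
  | IOld b of i = old b & generic b.

Lemma enl_indexP i : enl_index i.
Proof.
case: (split_ordP (i : 'I_(2 + m))) => [a ->|b ->].
  case: a => [[|[|a]] ha] //.
  - by apply: IE0; apply/val_inj.
  - by apply: IE1; apply/val_inj.
case: (eqVneq b j0) => [->|h0]; first exact: IF0.
case: (eqVneq b j1) => [->|h1]; first exact: IF1.
by apply: (@IOld _ b erefl); rewrite /generic h0 h1.
Qed.

Variant old_index (i : 'I_m) : Type :=
  | IJ0 of i = j0 | IJ1 of i = j1 | IGen of generic i.

Lemma old_indexP i : old_index i.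
Proof.
case: (eqVneq i j0) => [->|h0]; first exact: IJ0.
case: (eqVneq i j1) => [->|h1]; first exact: IJ1.
by apply: IGen; rewrite /generic h0 h1.
Qed.

Lemma old_eq a b : (old a == old b) = (a == b).
Proof. by rewrite [LHS]/eq_op /= eqn_add2l. Qed.
Lemma e0_old b : (e0 == old b) = false. Proof. by rewrite [LHS]/eq_op /= add2n. Qed.
Lemma e1_old b : (e1 == old b) = false. Proof. by rewrite [LHS]/eq_op /= add2n. Qed.
Lemma old_e0 b : (old b == e0) = false. Proof. by rewrite [LHS]/eq_op /= add2n. Qed.
Lemma old_e1 b : (old b == e1) = false. Proof. by rewrite [LHS]/eq_op /= add2n. Qed.
Lemma e0_e1 : (e0 == e1) = false. Proof. by []. Qed.
Lemma e1_e0 : (e1 == e0) = false. Proof. by []. Qed.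
Lemma j0_j1 : (j0 == j1) = false. Proof. by []. Qed.
Lemma j1_j0 : (j1 == j0) = false. Proof. by []. Qed.
Lemma generic_j0 b : generic b -> (b == j0) = false. Proof. by case/andP => /negbTE. Qed.
Lemma generic_j1 b : generic b -> (b == j1) = false. Proof. by case/andP => _ /negbTE. Qed.
Lemma j0_generic b : generic b -> (j0 == b) = false.
Proof. by move=> h; rewrite eq_sym generic_j0. Qed.
Lemma j1_generic b : generic b -> (j1 == b) = false.
Proof. by move=> h; rewrite eq_sym generic_j1. Qed.
End Indices.

Lemma ord0_lshift : (@ord0 1) = lshift 1 (@ord0 0). Proof. exact: val_inj. Qed.
Lemma ordmax_rshift : (@ord_max 1) = rshift 1 (@ord0 0). Proof. exact: val_inj. Qed.

Ltac index_eqs :=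
  rewrite ?old_eq ?e0_old ?e1_old ?old_e0 ?old_e1 ?e0_e1 ?e1_e0 ?j0_j1 ?j1_j0 ?eqxx;
  repeat match goal with H : is_true (generic ?b) |- _ =>
    progress rewrite ?(generic_j0 H) ?(generic_j1 H) ?(j0_generic H) ?(j1_generic H) end.

Ltac block_entry1 := etransitivity; [first [apply: block_mxEul|apply: block_mxEur
  |apply: block_mxEdl|apply: block_mxEdr|apply: col_mxEu|apply: col_mxEd
  |apply: row_mxEl|apply: row_mxEr]|].
Ltac block_entry := block_entry1; rewrite ?ord0_lshift ?ordmax_rshift; try block_entry1.

Ltac J_entry b := rewrite mxE /= ?add2n ?add0n; case: b => [[|[|[|b]]] hb] //=;
  rewrite ?andbF ?andFb //; try reflexivity.

Section Entries.
Variable g : nat.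
Local Notation m := ((g.+1).*2).
Local Notation N := ((g.+2).*2).
Variables (V : 'M[rat]_m) (x : rat) (rho : 'cV[rat]_m).
Local Notation Rv := (row_enl V x rho).
Local Notation Cv := (col_enl V x rho).

Lemma row_enl_e0 (c : 'I_N) : Rv (e0 g) c = 0.
Proof.
case: (split_ordP (c : 'I_(2 + m))) => [a ->|b ->]; rewrite /row_enl /e0;
  block_entry; by rewrite ?mxE.
Qed.
Lemma row_enl_e1e0 : Rv (e1 g) (e0 g) = 1.
Proof. by rewrite /row_enl /e0 /e1; block_entry; rewrite mxE. Qed.
Lemma row_enl_e1e1 : Rv (e1 g) (e1 g) = x.
Proof. by rewrite /row_enl /e1; block_entry; rewrite mxE. Qed.
Lemma row_enl_e1old b : Rv (e1 g) (old b) = rho b 0.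
Proof. by rewrite /row_enl /e1 /old; block_entry; rewrite ?mxE. Qed.
Lemma row_enl_olde0 b : Rv (old b) (e0 g) = 0.
Proof. by rewrite /row_enl /e0 /old; block_entry; rewrite ?mxE. Qed.
Lemma row_enl_olde1 b : Rv (old b) (e1 g) = rho b 0.
Proof. by rewrite /row_enl /e1 /old; block_entry; rewrite ?mxE. Qed.
Lemma row_enl_old a b : Rv (old a) (old b) = V a b.
Proof. by rewrite /row_enl /old; block_entry. Qed.

Lemma col_enl_e0 (c : 'I_N) : Cv c (e0 g) = 0.
Proof.
case: (split_ordP (c : 'I_(2 + m))) => [a ->|b ->]; rewrite /col_enl /e0; block_entry.
  by rewrite mxE; case: a => [[|[|]]].
by rewrite ?mxE.
Qed.
Lemma col_enl_e0e1 : Cv (e0 g) (e1 g) = -1.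
Proof. by rewrite /col_enl /e0 /e1; block_entry; rewrite mxE. Qed.
Lemma col_enl_e1e1 : Cv (e1 g) (e1 g) = x.
Proof. by rewrite /col_enl /e1; block_entry; rewrite mxE. Qed.
Lemma col_enl_e0old b : Cv (e0 g) (old b) = 0.
Proof. by rewrite /col_enl /e0 /old; block_entry; rewrite ?mxE. Qed.
Lemma col_enl_e1old b : Cv (e1 g) (old b) = rho b 0.
Proof. by rewrite /col_enl /e1 /old; block_entry; rewrite ?mxE. Qed.
Lemma col_enl_olde1 b : Cv (old b) (e1 g) = rho b 0.
Proof. by rewrite /col_enl /e1 /old; block_entry; rewrite ?mxE. Qed.
Lemma col_enl_old a b : Cv (old a) (old b) = V a b.
Proof. by rewrite /col_enl /old; block_entry. Qed.
End Entries.

Section JEntries.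
Variable g : nat.

Lemma Jbig_e0e1 : Jmx g.+2 (e0 g) (e1 g) = -1. Proof. by rewrite mxE. Qed.
Lemma Jbig_e1e0 : Jmx g.+2 (e1 g) (e0 g) = 1. Proof. by rewrite mxE. Qed.
Lemma Jbig_e0e0 : Jmx g.+2 (e0 g) (e0 g) = 0. Proof. by rewrite mxE. Qed.
Lemma Jbig_e1e1 : Jmx g.+2 (e1 g) (e1 g) = 0. Proof. by rewrite mxE. Qed.
Lemma Jbig_e0old b : Jmx g.+2 (e0 g) (old b) = 0. Proof. by rewrite mxE. Qed.
Lemma Jbig_e1old b : Jmx g.+2 (e1 g) (old b) = 0. Proof. by rewrite mxE. Qed.
Lemma Jbig_olde0 b : Jmx g.+2 (old b) (e0 g) = 0. Proof. J_entry b. Qed.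
Lemma Jbig_olde1 b : Jmx g.+2 (old b) (e1 g) = 0. Proof. J_entry b. Qed.
Lemma Jbig_old a b : Jmx g.+2 (old a) (old b) = Jmx g.+1 a b.
Proof. by rewrite !mxE /= ?add2n ?add0n !negbK !eqSS. Qed.

Lemma J_j0j1 : Jmx g.+1 (j0 g) (j1 g) = -1. Proof. by rewrite mxE. Qed.
Lemma J_j1j0 : Jmx g.+1 (j1 g) (j0 g) = 1. Proof. by rewrite mxE. Qed.
Lemma J_j0j0 : Jmx g.+1 (j0 g) (j0 g) = 0. Proof. by rewrite mxE. Qed.
Lemma J_j1j1 : Jmx g.+1 (j1 g) (j1 g) = 0. Proof. by rewrite mxE. Qed.
Lemma J_genj0 b : generic b -> Jmx g.+1 b (j0 g) = 0.
Proof. rewrite /generic; J_entry b. Qed.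
Lemma J_genj1 b : generic b -> Jmx g.+1 b (j1 g) = 0.
Proof. rewrite /generic; J_entry b. Qed.
Lemma J_j0gen b : generic b -> Jmx g.+1 (j0 g) b = 0.
Proof. rewrite /generic; J_entry b. Qed.
Lemma J_j1gen b : generic b -> Jmx g.+1 (j1 g) b = 0.
Proof. rewrite /generic; J_entry b. Qed.
End JEntries.

Ltac enl_entries :=
  rewrite ?row_enl_e0 ?row_enl_e1e0 ?row_enl_e1e1 ?row_enl_e1old ?row_enl_olde0
    ?row_enl_olde1 ?row_enl_old ?col_enl_e0 ?col_enl_e0e1 ?col_enl_e1e1
    ?col_enl_e0old ?col_enl_e1old ?col_enl_olde1 ?col_enl_old.

Ltac J_entries :=
  rewrite ?Jbig_e0e1 ?Jbig_e1e0 ?Jbig_e0e0 ?Jbig_e1e1 ?Jbig_e0old ?Jbig_e1old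
    ?Jbig_olde0 ?Jbig_olde1 ?Jbig_old ?J_j0j1 ?J_j1j0 ?J_j0j0 ?J_j1j1;
  repeat match goal with H : is_true (generic ?b) |- _ =>
    progress rewrite ?(J_genj0 H) ?(J_genj1 H) ?(J_j0gen H) ?(J_j1gen H) end.

Section SymplecticMatrix.
Variables (g : nat) (c : rat).
Local Notation m := ((g.+1).*2).
Local Notation N := ((g.+2).*2).

Definition Pc_row (i : 'I_N) : 'rV[rat]_N :=
  match split (i : 'I_(2 + m)) with
  | inl a => if a == ord0 then ebasis (f1 g) - c *: ebasis (e1 g) else - ebasis (f0 g)
  | inr b => if b == j0 g then c *: ebasis (f0 g) + ebasis (e0 g)
             else if b == j1 g then ebasis (e1 g) else ebasis (old b)
  end.
Definition Pc : 'M[rat]_N := \matrix_i Pc_row i.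

Definition Pc_inv_row (i : 'I_N) : 'rV[rat]_N :=
  match split (i : 'I_(2 + m)) with
  | inl a => if a == ord0 then ebasis (f0 g) + c *: ebasis (e1 g) else ebasis (f1 g)
  | inr b => if b == j0 g then - ebasis (e1 g)
             else if b == j1 g then ebasis (e0 g) + c *: ebasis (f1 g) else ebasis (old b)
  end.
Definition Pc_inv : 'M[rat]_N := \matrix_i Pc_inv_row i.

Lemma row_Pc_e0 : row (e0 g) Pc = ebasis (f1 g) - c *: ebasis (e1 g).
Proof. by rewrite rowK /Pc_row /e0 (unsplitK (inl _ _)). Qed.
Lemma row_Pc_e1 : row (e1 g) Pc = - ebasis (f0 g).
Proof. by rewrite rowK /Pc_row /e1 (unsplitK (inl _ _)). Qed.
Lemma row_Pc_f0 : row (f0 g) Pc = c *: ebasis (f0 g) + ebasis (e0 g).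
Proof. by rewrite rowK /Pc_row /f0 /old (unsplitK (inr _ _)) eqxx. Qed.
Lemma row_Pc_f1 : row (f1 g) Pc = ebasis (e1 g).
Proof. by rewrite rowK /Pc_row /f1 /old (unsplitK (inr _ _)). Qed.
Lemma row_Pc_old b : generic b -> row (old b) Pc = ebasis (old b).
Proof.
case/andP => h0 h1.
by rewrite rowK /Pc_row /old (unsplitK (inr _ _)) (negbTE h0) (negbTE h1).
Qed.

Lemma row_Pc_inv_e0 : row (e0 g) Pc_inv = ebasis (f0 g) + c *: ebasis (e1 g).
Proof. by rewrite rowK /Pc_inv_row /e0 (unsplitK (inl _ _)). Qed.
Lemma row_Pc_inv_e1 : row (e1 g) Pc_inv = ebasis (f1 g).
Proof. by rewrite rowK /Pc_inv_row /e1 (unsplitK (inl _ _)). Qed.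
Lemma row_Pc_inv_f0 : row (f0 g) Pc_inv = - ebasis (e1 g).
Proof. by rewrite rowK /Pc_inv_row /f0 /old (unsplitK (inr _ _)) eqxx. Qed.
Lemma row_Pc_inv_f1 : row (f1 g) Pc_inv = ebasis (e0 g) + c *: ebasis (f1 g).
Proof. by rewrite rowK /Pc_inv_row /f1 /old (unsplitK (inr _ _)). Qed.
Lemma row_Pc_inv_old b : generic b -> row (old b) Pc_inv = ebasis (old b).
Proof.
case/andP => h0 h1.
by rewrite rowK /Pc_inv_row /old (unsplitK (inr _ _)) (negbTE h0) (negbTE h1).
Qed.
End SymplecticMatrix.

Ltac Pc_rows :=
  rewrite ?row_Pc_e0 ?row_Pc_e1 ?row_Pc_f0 ?row_Pc_f1
    ?row_Pc_inv_e0 ?row_Pc_inv_e1 ?row_Pc_inv_f0 ?row_Pc_inv_f1;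
  repeat match goal with H : is_true (generic ?b) |- _ =>
    progress rewrite ?(row_Pc_old _ H) ?(row_Pc_inv_old _ H) end.

Ltac int_closure :=
  repeat first [ assumption | apply: natr_int | rewrite rpredN
               | apply: rpredD | apply: rpredB | apply: rpredM ].

Section SymplecticMatrixFacts.
Variables (g : nat) (c : rat).

(* P_c preserves J: the pairs (e0, e1) and (f0, f1) are mapped to symplectic
   pairs spanning the same 4-dimensional symplectic subspace. *)
Lemma Pc_symplectic : symplectic (Pc g c).
Proof.
apply/matrixP => i j.
case: (enl_indexP i) => [->|->|->|->|a -> ha];
case: (enl_indexP j) => [->|->|->|->|b -> hb];
  rewrite bilin_entry; Pc_rows; bilin_expand; rewrite /f0 /f1; J_entries; ring.
Qed.

Lemma Pc_inv_mul : Pc_inv g c *m Pc g c = 1%:M.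
Proof.
apply/row_matrixP => i; rewrite row_mul row1.
case: (enl_indexP i) => [->|->|->|->|b -> hb]; Pc_rows;
  rewrite ?mulmxDl ?mulNmx -?scalemxAl /ebasis -!rowE; Pc_rows;
  by apply/rowP => j; rewrite !mxE; ring.
Qed.

Lemma Pc_integral : c \is a Num.int -> integral_mx (Pc g c).
Proof.
move=> c_int i j; have -> : Pc g c i j = (row i (Pc g c)) 0 j by rewrite [RHS]mxE.
by case: (enl_indexP i) => [->|->|->|->|b -> hb]; Pc_rows; rewrite !mxE; int_closure.
Qed.

Lemma Pc_inv_integral : c \is a Num.int -> integral_mx (Pc_inv g c).
Proof.
move=> c_int i j; have -> : Pc_inv g c i j = (row i (Pc_inv g c)) 0 j by rewrite [RHS]mxE.
by case: (enl_indexP i) => [->|->|->|->|b -> hb]; Pc_rows; rewrite !mxE; int_closure.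
Qed.
End SymplecticMatrixFacts.

Section SeifertEntries.
Variables (g : nat) (V : 'M[rat]_((g.+1).*2)).
Hypothesis sV : seifert V.

Lemma seifert_entry a b : V a b = V b a + Jmx g.+1 a b.
Proof. by rewrite -sV !mxE; ring. Qed.
Lemma seifert_genj0 b : generic b -> V b (j0 g) = V (j0 g) b.
Proof. by move=> h; rewrite seifert_entry J_genj0 // addr0. Qed.
Lemma seifert_genj1 b : generic b -> V b (j1 g) = V (j1 g) b.
Proof. by move=> h; rewrite seifert_entry J_genj1 // addr0. Qed.
Lemma seifert_j1j0 : V (j1 g) (j0 g) = V (j0 g) (j1 g) + 1.
Proof. by rewrite seifert_entry J_j1j0. Qed.
End SeifertEntries.

Section DeltaEntries.
Variables (g : nat) (n : rat).
Local Notation D := (Delta g.+1 n).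

Lemma delta_diag_j0 : delta_diag n (j0 g) = n. Proof. by rewrite /delta_diag mxE. Qed.
Lemma delta_diag_j1 : delta_diag n (j1 g) = n^-1. Proof. by rewrite /delta_diag mxE. Qed.
Lemma delta_diag_gen (b : 'I_((g.+1).*2)) : generic b -> delta_diag n b = 1.
Proof. by rewrite /generic /delta_diag mxE eqxx; case: b => [[|[|b]] hb]. Qed.

Lemma Delta_entry a b : D a b = if a == b then delta_diag n a else 0.
Proof. by rewrite /delta_diag !mxE eqxx. Qed.

Lemma Delta_congr_entry (V : 'M[rat]_((g.+1).*2)) a b :
  (D *m V *m D^T) a b = delta_diag n a * (delta_diag n b * V a b).
Proof. by rewrite bilin_entry !row_Delta bilinZl bilinZr bilin_basis. Qed.
End DeltaEntries.

Ltac seifert_simpl sV :=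
  repeat match goal with H : is_true (generic ?b) |- _ =>
    progress rewrite ?(seifert_genj0 sV H) ?(seifert_genj1 sV H) ?(delta_diag_gen _ H) end;
  rewrite ?(seifert_j1j0 sV) ?delta_diag_j0 ?delta_diag_j1.

Section EnlargementCongruence.
Variables (g : nat) (c : rat) (V : 'M[rat]_((g.+1).*2)).
Hypotheses (c0 : c != 0) (sV : seifert V).

Definition x_c : rat := V (j1 g) (j1 g) / (c * c).
Definition rho_c : 'cV[rat]_((g.+1).*2) := c^-1 *: col (j1 g) V.
Definition Vt_c : 'M[rat]_((g.+2).*2) := row_enl V x_c rho_c.
Definition Wt_c : 'M[rat]_((g.+2).*2) := Pc g c *m Vt_c *m (Pc g c)^T.
Definition sigma_c : 'cV[rat]_((g.+1).*2) := \col_b Wt_c (e1 g) (old b).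

Lemma rho_c_entry b : rho_c b 0 = c^-1 * V b (j1 g). Proof. by rewrite !mxE. Qed.
Lemma sigma_c_entry b : sigma_c b 0 = Wt_c (e1 g) (old b). Proof. by rewrite mxE. Qed.

Lemma Wt_c_col_enl :
  Wt_c = col_enl (Delta g.+1 c *m V *m (Delta g.+1 c)^T) (Wt_c (e1 g) (e1 g)) sigma_c.
Proof.
apply/matrixP => i j.
case: (enl_indexP i) => [->|->|->|->|a -> ha];
case: (enl_indexP j) => [->|->|->|->|b -> hb];
  rewrite /f0 /f1; enl_entries; rewrite ?sigma_c_entry ?Delta_congr_entry /Wt_c ?bilin_entry;
  Pc_rows; bilin_expand; rewrite /f0 /f1; enl_entries; rewrite /x_c ?rho_c_entry;
  seifert_simpl sV.
all: try ring. all: by field.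
Qed.
End EnlargementCongruence.

Section PolyEntries.
Variable p : nat.

Lemma scale_sub_entry (x y : 'rV[{poly rat}]_p) (a : {poly rat}) j :
  (a *: (x - y)) 0 j = a * (x 0 j - y 0 j).
Proof. by rewrite !mxE. Qed.
Lemma row_map_tr_entry (A : 'M[rat]_p) i b :
  (row i (map_mx polyC A^T)) 0 b = (A b i)%:P.
Proof. by rewrite !mxE. Qed.
Lemma alex_rel_tr_entry (M : 'M[rat]_p) a b :
  (alex_rel M)^T a b = 'X * (M b a)%:P - (M a b)%:P.
Proof. by rewrite !mxE mulrC. Qed.
Lemma scalar_mx_entry (a b : 'I_p) : (1%:M : 'M[rat]_p) a b = (a == b)%:R.
Proof. by rewrite mxE. Qed.
End PolyEntries.

Section ShiftedRow.
Variables (g : nat) (R : nmodType) (v : 'rV[R]_((g.+1).*2)).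
Local Notation y := (row_mx (0 : 'rV[R]_2) v : 'rV_((g.+2).*2)).

(* The embedding of generators b_i |-> b_(i+2) of A(V) into A(Vt). *)
Lemma shifted_e0 : y 0 (e0 g) = 0. Proof. by rewrite /e0; block_entry; rewrite mxE. Qed.
Lemma shifted_e1 : y 0 (e1 g) = 0. Proof. by rewrite /e1; block_entry; rewrite mxE. Qed.
Lemma shifted_old b : y 0 (old b) = v 0 b. Proof. by rewrite /old; block_entry. Qed.
End ShiftedRow.

Lemma Pc_entry g c a b : Pc g c a b = bilin 1%:M (row a (Pc g c)) (ebasis b).
Proof. by rewrite -mul_row_entry mulmx1 [RHS]mxE. Qed.

(* tau-compatibility of a congruence Wt = P Vt P^T with the congruence
   W = D V D^T: the isomorphism A(V) -> A(W) induced by D followed by the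
   embedding into A(Wt) agrees, on every generator b_i, with the embedding
   into A(Vt) followed by the isomorphism induced by P. *)
Definition tau_compat (p : nat) (D : 'M[rat]_p) (Wt P : 'M[rat]_(2 + p)) : Prop :=
  forall i : 'I_p, alex_eq Wt (row (rshift 2 i) (map_mx polyC P^T))
                              (row_mx 0 (row i (map_mx polyC D^T))).

Ltac coef_finish :=
  rewrite /= ?mulr0n ?mulr1n; apply/polyP; case => [|[|?]];
  rewrite !(coefD, coefB, coefN, coefXM, coefCM, coefC, expr1, expr0, mul1r) /=;
  [ try ring; try by field .. ].

Section TauCompatibility.
Variables (g : nat) (c : rat) (V : 'M[rat]_((g.+1).*2)).
Hypotheses (c0 : c != 0) (sV : seifert V).
Local Notation Wt := (Wt_c c V).
Local Notation tau_at i := (alex_eq Wt (row (rshift 2 i) (map_mx polyC (Pc g c)^T))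
  (row_mx (0 : 'rV_2) (row i (map_mx polyC (Delta g.+1 c)^T)))).

Ltac tau_entries :=
  rewrite ?shifted_e0 ?shifted_e1 ?shifted_old ?row_map_tr_entry ?Delta_entry Pc_entry;
  Pc_rows; bilin_expand; rewrite ?scalar_mx_entry; index_eqs.

(* At j0 the two images of b_j0 differ by the relation of A(Wt) indexed by e0. *)
Lemma tau_c_j0 : tau_at (j0 g).
Proof.
exists 0%N, (- ebasis (e0 g)); apply/rowP => j.
rewrite scale_sub_entry row_map_tr_entry mul_row_entry bilinNl bilin_basis alex_rel_tr_entry.
case: (enl_indexP j) => [->|->|->|->|b -> hb]; tau_entries;
  rewrite /Wt_c ?bilin_entry; Pc_rows; bilin_expand; rewrite /f0 /f1; enl_entries;
  rewrite /Vt_c /x_c ?rho_c_entry; seifert_simpl sV; coef_finish.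
Qed.

(* At j1 they differ, after multiplication by t, by a combination of the
   relations indexed by e1 and f0. *)
Lemma tau_c_j1 : tau_at (j1 g).
Proof.
exists 1%N, (- ebasis (e1 g) - (c^-1)%:P *: ebasis (f0 g)); apply/rowP => j.
rewrite scale_sub_entry row_map_tr_entry mul_row_entry; bilin_expand;
  rewrite !alex_rel_tr_entry.
case: (enl_indexP j) => [->|->|->|->|b -> hb]; tau_entries;
  rewrite /Wt_c ?bilin_entry; Pc_rows; bilin_expand; rewrite /f0 /f1; enl_entries;
  rewrite /Vt_c /x_c ?rho_c_entry; seifert_simpl sV; coef_finish.
Qed.

(* Away from the pair (j0, j1), P_c and Delta_c act trivially, so the two
   images of b_i coincide already as vectors. *)
Lemma tau_c_generic i : generic i -> tau_at i.
Proof.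
move=> hi; suff -> : row (rshift 2 i) (map_mx polyC (Pc g c)^T) =
                    row_mx (0 : 'rV_2) (row i (map_mx polyC (Delta g.+1 c)^T)).
  exact: alex_eq_refl.
apply/rowP => j; rewrite row_map_tr_entry.
case: (enl_indexP j) => [->|->|->|->|b -> hb]; tau_entries.
1-4: by rewrite /= ?mulr0n ?mulr0 ?subr0 ?addr0 ?oppr0.
by rewrite (delta_diag_gen _ hb); case: (b == i).
Qed.

Lemma tau_c : tau_compat (Delta g.+1 c) Wt (Pc g c).
Proof.
by move=> i; case: (old_indexP i) => [->|->|hi];
  [exact: tau_c_j0 | exact: tau_c_j1 | exact: tau_c_generic].
Qed.
End TauCompatibility.

Lemma row_rshift_id p (i : 'I_p) :
  row (rshift 2 i) (1%:M : 'M[{poly rat}]_(2 + p)) = row_mx 0 (row i 1%:M).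
Proof. by rewrite !row1 delta_mx_rshift. Qed.

Lemma tau_compat_inv p (D D' : 'M[rat]_p) (Wt P Q : 'M[rat]_(2 + p)) :
  Q *m P = 1%:M -> D *m D' = 1%:M ->
  tau_compat D Wt P -> tau_compat D' (Q *m Wt *m Q^T) Q.
Proof.
move=> QP DD' tauP i; have PQ : P *m Q = 1%:M := mulmx1C QP.
(* Transported along Q, the compatibility of P expresses every generator
   b_(j+2) of A(Q Wt Q^T) through the image of D^T. *)
have tauQ j : alex_eq (Q *m Wt *m Q^T) (row j (row_mx (0 : 'M_(p, 2)) 1%:M))
    (row j (row_mx (0 : 'M_(p, 2)) (map_mx polyC D^T) *m (map_mx polyC Q)^T)).
  rewrite row_mul !row_row_mx !row0 -row_rshift_id.
  have := alex_eq_congr PQ (tauP j).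
  by rewrite -row_mul map_trmx -map_mxM -trmx_mul QP trmx1 map_mx1.
apply: alex_eq_sym.
have := alex_eq_mul (row i (map_mx polyC D'^T)) tauQ.
rewrite mulmxA !mul_mx_row !mulmx0 mulmx1 -row_mul -map_mxM -trmx_mul DD'.
by rewrite trmx1 map_mx1 -row_rshift_id -row_mul mul1mx map_trmx.
Qed.

Definition congruent_enlargements g (V W : 'M[rat]_(g.*2))
    (Vt Wt P : 'M[rat]_((g.+1).*2)) : Prop :=
  [/\ enlargement V Vt, enlargement W Wt, integral_mx P, symplectic P
    & Wt = P *m Vt *m P^T].

Lemma congruent_enlargements_Delta g (c : rat) (V : 'M[rat]_((g.+1).*2)) :
  c != 0 -> c \is a Num.int -> seifert V ->
  congruent_enlargements V (Delta g.+1 c *m V *m (Delta g.+1 c)^T)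
    (Vt_c c V) (Wt_c c V) (Pc g c) /\
  tau_compat (Delta g.+1 c) (Wt_c c V) (Pc g c).
Proof.
move=> c0 c_int sV; split; last exact: tau_c.
split; [ by exists (x_c c V), (rho_c c V); left
       | by exists (Wt_c c V (e1 g) (e1 g)), (sigma_c c V); right; exact: Wt_c_col_enl
       | exact: Pc_integral | exact: Pc_symplectic | by [] ].
Qed.

Lemma congruence_inverse g (V W D D' : 'M[rat]_(g.*2)) (Vt Wt P Q : 'M[rat]_((g.+1).*2)) :
  Q *m P = 1%:M -> D *m D' = 1%:M -> integral_mx Q ->
  congruent_enlargements V W Vt Wt P -> tau_compat D Wt P ->
  congruent_enlargements W V Wt Vt Q /\ tau_compat D' Vt Q.
Proof.
move=> QP DD' intQ [enlV enlW _ sP defWt] tauP.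
have defVt : Vt = Q *m Wt *m Q^T.
  by rewrite defWt !mulmxA QP mul1mx -mulmxA -trmx_mul QP trmx1 mulmx1.
split; first by split => //; exact: symplectic_inv sP.
by rewrite {1}defVt; exact: tau_compat_inv tauP.
Qed.

Theorem mainTheorem14 (g : nat) (n : rat) (V W : 'M[rat]_(g.*2)) :
  (0 < g)%N ->
  (exists k : nat, (0 < k)%N /\ (n = k%:R \/ n = (k%:R)^-1)) ->
  seifert V -> seifert W ->
  W = Delta g n *m V *m (Delta g n)^T ->
  exists (Vt Wt P : 'M[rat]_((g.+1).*2)),
    [/\ enlargement V Vt, enlargement W Wt,
        integral_mx P, symplectic P & Wt = P *m Vt *m P^T] /\
    exists a b : nat, forall i : 'I_(g.*2),
      alex_eq Wt
        ('X^a *: row (rshift 2 i) (map_mx polyC P^T))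
        ('X^b *: row_mx (0 : 'rV[{poly rat}]_2) (row i (map_mx polyC (Delta g n)^T))).
Proof.
case: g V W => [|g] V W // _ [k [k_gt0 def_n]] sV sW defW.
have k0 : k%:R != 0 :> rat by rewrite pnatr_eq0 -lt0n.
have k_int : (k%:R : rat) \is a Num.int by exact: natr_int.
suff [Vt [Wt [P [cong tau]]]] : exists Vt Wt P,
    congruent_enlargements V W Vt Wt P /\ tau_compat (Delta g.+1 n) Wt P.
  exists Vt, Wt, P; split => //.
  by exists 0%N, 0%N => i; rewrite !expr0 !scale1r; exact: tau.
case: def_n => def_n; rewrite {}def_n in defW *.
  have [cong tau] := congruent_enlargements_Delta k0 k_int sV.
  by exists (Vt_c k%:R V), (Wt_c k%:R V), (Pc g k%:R); rewrite defW.
(* n = 1/k: exchange V and W, apply the case n = k and invert P_k. *)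
have defV : V = Delta g.+1 k%:R *m W *m (Delta g.+1 k%:R)^T.
  by rewrite defW !mulmxA Delta_mulV // mul1mx -mulmxA -trmx_mul Delta_mulV // trmx1 mulmx1.
have [cong tau] := congruent_enlargements_Delta k0 k_int sW.
rewrite -defV in cong.
have [cong' tau'] := congruence_inverse (Pc_inv_mul g k%:R) (Delta_mulV g.+1 k0)
  (Pc_inv_integral k_int) cong tau.
by exists (Wt_c k%:R W), (Vt_c k%:R W), (Pc_inv g k%:R).
Qed.
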